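(* Let $\mathcal{A}=(A,\{\to_{1,\alpha}\}_{\alpha\in I})$ and $\mathcal{B}=(A,\{\to_{2,\beta}\}_{\beta\in I})$ be $I$-indexed ARSs on the same set $A$, and let $>$ be a well-founded order on $I$ having a least element $\bot$. Suppose $\to_{1,\bot}$ and $\to_{2,\bot}$ commute. If every local peak $b\;{}_{1,\alpha}\!\!\leftarrow a\to_{2,\beta} c$ with $(\alpha,\beta)\in I^2\setminus\{(\bot,\bot)\}$ is decreasing, then $\mathcal{A}$ and $\mathcal{B}$ commute.
   Context: An $I$-indexed abstract rewrite system (ARS) is a pair $(A,\{\to_\alpha\}_{\alpha\in I})$ of a set and a family of binary relations on it; $\to_\mathcal{A}$ is the union of all its relations. Relations $\to_1,\to_2$ commute if ${}_1\!\!\leftarrow^*\cdot\to_2^*\;\subseteq\;\to_2^*\cdot{}_1\!\!\leftarrow^*$; ARSs $\mathcal{A},\mathcal{B}$ commute if $\to_\mathcal{A}$ and $\to_\mathcal{B}$ commute. For $\alpha\in I$, $\curlyvee\alpha=\{\gamma\in I\mid\alpha>\gamma\}$ and $\curlyvee\alpha\beta=\curlyvee\alpha\cup\curlyvee\beta$. For $K\subseteq I$, $\leftrightarrow_K$ is the union of ${}_{1,\gamma}\!\!\leftarrow$ and $\to_{2,\gamma}$ over $\gamma\in K$. A local peak $b\;{}_{1,\alpha}\!\!\leftarrow a\to_{2,\beta} c$ is decreasing if $b\leftrightarrow^*_{\curlyvee\alpha}\cdot\to^=_{2,\beta}\cdot\leftrightarrow^*_{\curlyvee\alpha\beta}\cdot{}_{1,\alpha}\!\!\leftarrow^=\cdot\leftrightarrow^*_{\curlyvee\beta}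 c$, where $\to^=$ denotes the reflexive closure. *)

From Stdlib Require Import Relations.

Definition ARS (I A : Type) := I -> relation A.

Definition ars_union {I A : Type} (R : ARS I A) : relation A :=
  fun x y => exists alpha, R alpha x y.

Definition rcomp {A : Type} (R S : relation A) : relation A :=
  fun x z => exists y, R x y /\ S y z.

Definition rinv {A : Type} (R : relation A) : relation A := fun x y => R y x.

Definition rrefl {A : Type} (R : relation A) : relation A :=
  fun x y => x = y \/ R x y.

Definition commute {A : Type} (R1 R2 : relation A) : Prop :=
  forall a b c, clos_refl_trans A R1 a b -> clos_refl_trans A R2 a c ->
    exists d, clos_refl_trans A R2 b d /\ clos_refl_trans A R1 c d.

Definition ars_commute {I A : Type} (R1 R2 : ARS I A) : Prop :=
  commute (ars_union R1) (ars_union R2).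

Section Decreasing.
Context {I A : Type} (gt : I -> I -> Prop) (R1 R2 : ARS I A).

Definition below (alpha : I) : I -> Prop := fun gamma => gt alpha gamma.
Definition below2 (alpha beta : I) : I -> Prop :=
  fun gamma => gt alpha gamma \/ gt beta gamma.

Definition conv_K (K : I -> Prop) : relation A :=
  fun x y => exists gamma, K gamma /\ (R1 gamma y x \/ R2 gamma x y).

Definition decreasing_peak (alpha beta : I) (b c : A) : Prop :=
  rcomp (clos_refl_trans A (conv_K (below alpha)))
   (rcomp (rrefl (R2 beta))
    (rcomp (clos_refl_trans A (conv_K (below2 alpha beta)))
     (rcomp (rinv (rrefl (R1 alpha)))
            (clos_refl_trans A (conv_K (below beta)))))) b c.
End Decreasing.

(** The core is van Oostrom's theorem for commutation: if every local peak
    [b 1,alpha<- a ->2,beta c] of two labelled systems is decreasing, the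
    systems commute.  A peak of two labelled reduction sequences [X] and [Y]
    is measured by the multiset [lexmax X ++ lexmax Y] of the lexicographic
    maxima of its labels, compared in the Dershowitz-Manna multiset extension
    of the well-founded label order.  By well-founded induction on this
    measure every peak is closed by a valley that is itself decreasing
    (relative to the peak); a nontrivial peak is split into four tiles of
    smaller measure which are pasted together.

    Finally the bottom label is
    eliminated: replacing [bot]-steps by [bot]-sequences keeps reachability
    and, using that [bot]-steps commute, makes every local peak decreasing. *)

From Stdlib Require Import Relations List Permutation Classical ClassicalEpsilon
  Wellfounded.Transitive_Closure.
Import ListNotations.

Section DecreasingDiagrams.
Variable I : Type.

Definition holds (D : I -> Prop) (x : I) : bool :=
  if excluded_middle_informative (D x) then true else false.

Lemma holds_spec D x : holds D x = true <-> D x.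
Proof. unfold holds; destruct (excluded_middle_informative (D x)); intuition congruence. Qed.

Definition strip (D : I -> Prop) (l : list I) : list I := filter (fun x => negb (holds D x)) l.
Definition select (D : I -> Prop) (l : list I) : list I := filter (holds D) l.

Lemma In_strip D l x : In x (strip D l) <-> In x l /\ ~ D x.
Proof.
  unfold strip; rewrite filter_In, <- holds_spec.
  destruct (holds D x); simpl; intuition congruence.
Qed.

Lemma In_select D l x : In x (select D l) <-> In x l /\ D x.
Proof. unfold select; rewrite filter_In, holds_spec; tauto. Qed.

Lemma strip_app D l1 l2 : strip D (l1 ++ l2) = strip D l1 ++ strip D l2.
Proof. apply filter_app. Qed.

Lemma strip_cons D a l :
  strip D (a :: l) = if holds D a then strip D l else a :: strip D l.
Proof. unfold strip; simpl; destruct (holds D a); reflexivity. Qed.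

Lemma strip_ext D E l : (forall x, D x <-> E x) -> strip D l = strip E l.
Proof.
  intros HDE; induction l as [|a l IH]; [reflexivity|]; rewrite !strip_cons, IH.
  replace (holds E a) with (holds D a); [reflexivity|].
  apply Bool.eq_true_iff_eq; rewrite !holds_spec; apply HDE.
Qed.

Lemma holds_or D E x : holds (fun y => D y \/ E y) x = orb (holds D x) (holds E x).
Proof.
  apply Bool.eq_true_iff_eq; rewrite Bool.orb_true_iff, !holds_spec; reflexivity.
Qed.

Lemma strip_strip D E l : strip D (strip E l) = strip (fun x => D x \/ E x) l.
Proof.
  induction l as [|a l IH]; [reflexivity|]; rewrite !strip_cons, holds_or.
  destruct (holds E a); [rewrite Bool.orb_true_r; exact IH|]; rewrite strip_cons.
  destruct (holds D a); simpl; congruence.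
Qed.

Lemma strip_absorb D E l : (forall x, E x -> D x) -> strip D (strip E l) = strip D l.
Proof. intros H; rewrite strip_strip; apply strip_ext; firstorder. Qed.

Lemma strip_all D l : (forall x, In x l -> D x) -> strip D l = [].
Proof.
  intros H; destruct (strip D l) as [|x s] eqn:E; [reflexivity|].
  assert (Hx : In x (strip D l)) by (rewrite E; left; reflexivity).
  apply In_strip in Hx; destruct Hx as [Hx HnD]; exfalso; exact (HnD (H x Hx)).
Qed.

Lemma select_none D l : (forall x, In x l -> ~ D x) -> select D l = [].
Proof.
  intros H; destruct (select D l) as [|x s] eqn:E; [reflexivity|].
  assert (Hx : In x (select D l)) by (rewrite E; left; reflexivity).
  apply In_select in Hx; destruct Hx as [Hx HD]; exfalso; exact (H x Hx HD).
Qed.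

Lemma strip_none D l : (forall x, In x l -> ~ D x) -> strip D l = l.
Proof.
  induction l as [|a l IH]; intros H; [reflexivity|]; rewrite strip_cons.
  destruct (holds D a) eqn:Ha.
  - apply holds_spec in Ha; exfalso; exact (H a (or_introl eq_refl) Ha).
  - f_equal; apply IH; intros x Hx; apply H; right; exact Hx.
Qed.

Lemma strip_perm D l l' : Permutation l l' -> Permutation (strip D l) (strip D l').
Proof.
  induction 1 as [|x l l' _ IH|x y l|l l' l'' _ IH1 _ IH2]; rewrite ?strip_cons.
  - constructor.
  - destruct (holds D x); [exact IH | apply perm_skip, IH].
  - destruct (holds D x), (holds D y); try reflexivity; apply perm_swap.
  - eapply perm_trans; eassumption.
Qed.

Lemma strip_select D l : Permutation l (strip D l ++ select D l).
Proof.
  induction l as [|a l IH]; [reflexivity|]; unfold strip, select in *; simpl.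
  destruct (holds D a); simpl.
  - apply Permutation_cons_app; exact IH.
  - apply perm_skip; exact IH.
Qed.

(** * The multiset extension of the label order

    Multisets are lists up to permutation.  [mult1 N M]: [N] arises from [M] by
    replacing one element [a] by finitely many elements below [a]; the multiset
    order [mlt] is its transitive closure (Dershowitz-Manna). *)

Variable gt : I -> I -> Prop.
Hypothesis gt_trans : forall x y z, gt x y -> gt y z -> gt x z.
Hypothesis gt_wf : well_founded (fun x y => gt y x).

Definition mult1 (N M : list I) : Prop :=
  exists a M0 K, Permutation M (a :: M0) /\ Permutation N (K ++ M0) /\
    (forall k, In k K -> gt a k).
Definition mlt : list I -> list I -> Prop := clos_trans _ mult1.
Definition mle (N M : list I) : Prop := Permutation N M \/ mlt N M.

Lemma mult1_perm N N' M M' :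
  Permutation N N' -> Permutation M M' -> mult1 N M -> mult1 N' M'.
Proof.
  intros HN HM (a & M0 & K & H1 & H2 & H3); exists a, M0, K; repeat split; auto.
  - rewrite <- HM; exact H1.
  - rewrite <- HN; exact H2.
Qed.

Lemma mlt_perm N N' M M' :
  Permutation N N' -> Permutation M M' -> mlt N M -> mlt N' M'.
Proof.
  intros HN HM H; revert N' M' HN HM.
  induction H as [N M H|N M L _ IH1 _ IH2]; intros N' M' HN HM.
  - apply t_step; eapply mult1_perm; eassumption.
  - eapply t_trans; [apply IH1 | apply IH2]; eauto.
Qed.

Lemma mle_perm N N' M M' :
  Permutation N N' -> Permutation M M' -> mle N M -> mle N' M'.
Proof.
  intros HN HM [H|H]; [left | right; eapply mlt_perm; eassumption].
  rewrite <- HN, <- HM; exact H.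
Qed.

Lemma mle_refl M : mle M M.
Proof. left; reflexivity. Qed.

Lemma mlt_mle_trans L M N : mlt L M -> mle M N -> mlt L N.
Proof.
  intros H [H'|H']; [eapply mlt_perm; [reflexivity | exact H' | exact H] | eapply t_trans; eauto].
Qed.

Lemma mle_mlt_trans L M N : mle L M -> mlt M N -> mlt L N.
Proof.
  intros [H|H] H';
    [eapply mlt_perm; [symmetry; exact H | reflexivity | exact H'] | eapply t_trans; eauto].
Qed.

Lemma mle_trans L M N : mle L M -> mle M N -> mle L N.
Proof.
  intros [H|H] H'; [eapply mle_perm; [symmetry; exact H | reflexivity | exact H'] |].
  right; eapply mlt_mle_trans; eassumption.
Qed.

Lemma mlt_app_l Z N M : mlt N M -> mlt (Z ++ N) (Z ++ M).
Proof.
  induction 1 as [N M (a & M0 & K & H1 & H2 & H3)|N M L _ IH1 _ IH2].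
  - apply t_step; exists a, (Z ++ M0), K; repeat split; auto.
    + rewrite H1; symmetry; apply Permutation_middle.
    + rewrite H2, !app_assoc; apply Permutation_app_tail, Permutation_app_comm.
  - eapply t_trans; eassumption.
Qed.

Lemma mle_app_l Z N M : mle N M -> mle (Z ++ N) (Z ++ M).
Proof.
  intros [H|H]; [left; apply Permutation_app_head, H | right; apply mlt_app_l, H].
Qed.

Lemma mle_app L M N P : mle L M -> mle N P -> mle (L ++ N) (M ++ P).
Proof.
  intros H1 H2; apply mle_trans with (M ++ N).
  - eapply mle_perm; [apply Permutation_app_comm | apply Permutation_app_comm |].
    apply mle_app_l, H1.
  - apply mle_app_l, H2.
Qed.

Lemma mlt_app_r L M N P : mle L M -> mlt N P -> mlt (L ++ N) (M ++ P).
Proof.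
  intros H1 H2; apply mle_mlt_trans with (M ++ N).
  - apply (mle_app _ _ _ _ H1 (mle_refl N)).
  - apply mlt_app_l, H2.
Qed.

Lemma mle_app_self M N : mle M (M ++ N).
Proof.
  induction N as [|b N IH].
  - rewrite app_nil_r; apply mle_refl.
  - apply mle_trans with (M ++ N); [exact IH|]; right; apply t_step.
    exists b, (M ++ N), []; repeat split.
    + symmetry; apply Permutation_middle.
    + reflexivity.
    + intros k [].
Qed.

Lemma mle_strip_self D l : mle (strip D l) l.
Proof.
  eapply mle_perm; [reflexivity | symmetry; apply (strip_select D l) |].
  apply mle_app_self.
Qed.

Lemma mle_strip_weaken D E l : (forall x, D x -> E x) -> mle (strip E l) (strip D l).
Proof. intros H; rewrite <- (strip_absorb E D l H); apply mle_strip_self. Qed.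

Lemma mlt_dominated K X : X <> [] ->
  (forall k, In k K -> exists x, In x X /\ gt x k) -> mlt K X.
Proof.
  revert K; induction X as [|x X IH]; intros K Hne H; [congruence|].
  destruct X as [|x' X'].
  - apply t_step; exists x, [], K; split; [reflexivity | split].
    + rewrite app_nil_r; reflexivity.
    + intros k Hk; destruct (H k Hk) as (y & [<-|[]] & Hy); exact Hy.
  - set (Kx := fun k => gt x k).
    apply mlt_perm with (select Kx K ++ strip Kx K) (x :: x' :: X');
      [rewrite Permutation_app_comm; symmetry; apply strip_select | reflexivity |].
    apply mlt_mle_trans with (select Kx K ++ x' :: X').
    + apply mlt_app_l, IH; [congruence|].
      intros k Hk; apply In_strip in Hk; destruct Hk as [Hk HnK].
      destruct (H k Hk) as (y & [<-|Hy] & Hl); [contradiction | eauto].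
    + right; apply t_step; exists x, (x' :: X'), (select Kx K).
      split; [reflexivity | split; [reflexivity |]].
      intros k Hk; apply In_select in Hk; apply Hk.
Qed.

Lemma mlt_below_single K b : (forall k, In k K -> gt b k) -> mlt K [b].
Proof.
  intros H; apply mlt_dominated; [congruence|]; intros k Hk; exists b; split; [left|]; auto.
Qed.

Lemma mlt_below_pair K a b : (forall k, In k K -> gt a k \/ gt b k) -> mlt K [a; b].
Proof.
  intros H; apply mlt_dominated; [congruence|]; intros k Hk.
  destruct (H k Hk); [exists a | exists b]; simpl; auto.
Qed.

Definition ge_eq (y x : I) : Prop := x = y \/ gt y x.

Lemma ge_eq_trans x y z : ge_eq x y -> ge_eq y z -> ge_eq x z.
Proof. intros [<-|H1] [<-|H2]; [left | right | right |right; eauto]; auto. Qed.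

Lemma mlt_bounded N M : mlt N M -> forall n, In n N -> exists m, In m M /\ ge_eq m n.
Proof.
  induction 1 as [N M (a & M0 & K & H1 & H2 & H3)|N M L _ IH1 _ IH2]; intros n Hn.
  - apply (Permutation_in _ H2), in_app_or in Hn.
    destruct Hn as [Hn|Hn]; [exists a | exists n];
      (split; [apply (Permutation_in _ (Permutation_sym H1)); simpl; auto |]).
    + right; auto.
    + left; reflexivity.
  - destruct (IH1 n Hn) as (m1 & Hm1 & Hl1); destruct (IH2 m1 Hm1) as (m2 & Hm2 & Hl2).
    exists m2; split; [exact Hm2 | eapply ge_eq_trans; eassumption].
Qed.

Lemma mle_bounded N M : mle N M -> forall n, In n N -> exists m, In m M /\ ge_eq m n.
Proof.
  intros [H|H] n Hn; [| eapply mlt_bounded; eassumption].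
  exists n; split; [eapply Permutation_in; eassumption | left; reflexivity].
Qed.

Lemma mlt_single_inv N b : mlt N [b] -> forall n, In n N -> gt b n.
Proof.
  intros H; apply clos_trans_tn1 in H.
  assert (Hstep : forall L, mult1 L [b] -> forall n, In n L -> gt b n).
  { intros L (a & M0 & K & H1 & H2 & H3) n Hn.
    apply Permutation_length_1_inv in H1; injection H1 as -> ->.
    rewrite app_nil_r in H2; apply H3; eapply Permutation_in; eassumption. }
  destruct H as [L HL|L L' HL HN]; [exact (Hstep _ HL)|].
  intros n Hn; apply clos_tn1_trans in HN.
  destruct (mlt_bounded _ _ HN n Hn) as (m & Hm & [<-|Hl]); [exact (Hstep _ HL _ Hm)|].
  exact (gt_trans _ _ _ (Hstep _ HL _ Hm) Hl).
Qed.

Lemma mle_single_inv N b :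
  mle N [b] -> Permutation N [b] \/ (forall n, In n N -> gt b n).
Proof. intros [H|H]; [left; exact H | right; apply mlt_single_inv, H]. Qed.

Definition down_closed (D : I -> Prop) : Prop := forall x y, D x -> gt x y -> D y.

Lemma mle_strip D M N : down_closed D -> mle M N -> mle (strip D M) (strip D N).
Proof.
  intros HD [H|H]; [left; apply strip_perm, H |].
  induction H as [M N (a & M0 & K & H1 & H2 & H3)|M N L _ IH1 _ IH2];
    [| eapply mle_trans; eassumption].
  apply (strip_perm D) in H1, H2; rewrite strip_cons in H1; rewrite strip_app in H2.
  destruct (holds D a) eqn:Ha.
  - apply holds_spec in Ha.
    rewrite (strip_all D K) in H2 by (intros k Hk; exact (HD a k Ha (H3 k Hk))).
    left; rewrite H1; exact H2.
  - right; apply t_step; exists a, (strip D M0), (strip D K); repeat split; auto.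
    intros k Hk; apply In_strip in Hk; apply H3, Hk.
Qed.

(** Well-foundedness of the multiset order (Nipkow's accessibility argument). *)
Lemma mult1_cons_inv N a M0 : mult1 N (a :: M0) ->
  (exists M, mult1 M M0 /\ Permutation N (a :: M)) \/
  (exists K, (forall k, In k K -> gt a k) /\ Permutation N (K ++ M0)).
Proof.
  intros (b & M1 & K & H1 & H2 & H3).
  assert (Ha : In a (b :: M1)) by (eapply Permutation_in; [exact H1 | left; reflexivity]).
  destruct Ha as [<-|Ha].
  - right; exists K; split; [exact H3|].
    apply Permutation_cons_inv in H1; rewrite H2, H1; reflexivity.
  - left; apply in_split in Ha; destruct Ha as (l1 & l2 & ->).
    assert (HM0 : Permutation M0 (b :: l1 ++ l2)).
    { apply Permutation_cons_inv with a; rewrite H1, perm_swap.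
      apply perm_skip; symmetry; apply Permutation_middle. }
    exists (K ++ l1 ++ l2); split.
    + exists b, (l1 ++ l2), K; split; [exact HM0 | split; [reflexivity | exact H3]].
    + rewrite H2, !app_assoc; symmetry; apply Permutation_middle.
Qed.

Lemma acc_mult1_perm M M' : Acc mult1 M -> Permutation M M' -> Acc mult1 M'.
Proof.
  intros H HP; constructor; intros N HN; apply H.
  eapply mult1_perm; [reflexivity | symmetry; exact HP | exact HN].
Qed.

Lemma acc_mult1_cons a : forall M, Acc mult1 M -> Acc mult1 (a :: M).
Proof.
  induction (gt_wf a) as [a _ IHa]; intros M HM.
  induction HM as [M HM IHM]; constructor; intros N HN.
  destruct (mult1_cons_inv _ _ _ HN) as [(M' & H1 & H2)|(K & H1 & H2)].
  - eapply acc_mult1_perm; [apply IHM, H1 | symmetry; exact H2].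
  - eapply acc_mult1_perm; [| symmetry; exact H2].
    clear H2; induction K as [|k K IHK]; [constructor; exact HM|].
    apply IHa; [apply H1; left; reflexivity|]; apply IHK; intros; apply H1; right; assumption.
Qed.

Lemma mlt_wf : well_founded mlt.
Proof.
  apply wf_clos_trans; intros M; induction M as [|a M IH].
  - constructor; intros N (a & M0 & K & H1 & _); apply Permutation_nil in H1; discriminate.
  - apply acc_mult1_cons, IH.
Qed.

(** * Lexicographic maxima of label sequences

    The lexicographic
    maximum [lexmax s] of a label sequence keeps each label not below an
    earlier one; it is the measure of a reduction sequence labelled by [s].
    [lexmax_above S s] further removes the labels below [S]. *)

Definition down (S : list I) (x : I) : Prop := exists y, In y S /\ gt y x.

Lemma down_is_closed S : down_closed (down S).
Proof. intros x y (z & Hz & Hzx) Hxy; exists z; eauto. Qed.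

Lemma down_in S x y : In y S -> gt y x -> down S x.
Proof. intros; exists y; auto. Qed.

Lemma down_single a x : down [a] x <-> gt a x.
Proof. split; [intros (y & [<-|[]] & H); exact H | intros H; exists a; simpl; auto]. Qed.

Lemma down_app S T x : down (S ++ T) x <-> down S x \/ down T x.
Proof.
  split; [intros (y & Hy & H); apply in_app_or in Hy; destruct Hy; [left|right]; exists y; auto|].
  intros [(y & Hy & H)|(y & Hy & H)]; exists y; split; auto; apply in_or_app; auto.
Qed.

Lemma down_cons a S x : down (a :: S) x <-> gt a x \/ down S x.
Proof. rewrite <- down_single; exact (down_app [a] S x). Qed.

Lemma strip_down_nil l : strip (down []) l = l.
Proof. apply strip_none; intros x _ (y & [] & _). Qed.

Fixpoint lexmax (s : list I) : list I :=
  match s with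
  | [] => []
  | a :: s' => a :: strip (down [a]) (lexmax s')
  end.

Definition lexmax_above (S s : list I) : list I := strip (down S) (lexmax s).

Lemma lexmax_app s t : lexmax (s ++ t) = lexmax s ++ lexmax_above s t.
Proof.
  unfold lexmax_above; induction s as [|a s IH]; simpl.
  - rewrite strip_down_nil; reflexivity.
  - rewrite IH, strip_app, strip_strip; do 2 f_equal.
    apply strip_ext; intros x; rewrite (down_cons a s x), down_single; reflexivity.
Qed.

Lemma lexmax_incl s x : In x (lexmax s) -> In x s.
Proof.
  induction s as [|a s IH]; simpl; [tauto|].
  intros [H|H]; [left; exact H | apply In_strip in H; right; apply IH, H].
Qed.

Lemma lexmax_cover s x : In x s -> exists y, In y (lexmax s) /\ ge_eq y x.
Proof.
  induction s as [|a s IH]; simpl; [tauto|].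
  intros [<-|H]; [exists a; split; [left|left]; reflexivity|].
  destruct (IH H) as (y & Hy & Hxy).
  destruct (classic (gt a y)) as [Hay|Hay].
  - exists a; split; [left; reflexivity | eapply ge_eq_trans; [right; exact Hay | exact Hxy]].
  - exists y; split; [right; apply In_strip; rewrite down_single; auto | exact Hxy].
Qed.

Lemma lexmax_bounded P s : Forall P s -> Forall P (lexmax s).
Proof. rewrite !Forall_forall; intros H x Hx; apply H, lexmax_incl, Hx. Qed.

Definition upto (S : list I) (x : I) : Prop := exists y, In y S /\ ge_eq y x.

Lemma labels_bounded X Y Z : mle (lexmax_above X Z) (lexmax Y) ->
  forall z, In z Z -> down X z \/ upto Y z.
Proof.
  intros H z Hz; destruct (lexmax_cover _ _ Hz) as (y & Hy & Hyz).
  destruct (classic (down X y)) as [HX|HX].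
  - left; destruct Hyz as [<-|Hyz]; [exact HX | eapply down_is_closed; eassumption].
  - right; destruct (mle_bounded _ _ H y) as (w & Hw & Hwy); [apply In_strip; auto|].
    exists w; split; [apply lexmax_incl, Hw | eapply ge_eq_trans; eassumption].
Qed.

(** * Measures of diagrams

    A peak labelled [X] (left, first system) and [Y] (right, second system) is
    closed by a valley labelled [Y'] (below the left leg) and [X'] (below the
    right leg). *)

Definition decr_valley (X Y X' Y' : list I) : Prop :=
  mle (lexmax_above X Y') (lexmax Y) /\ mle (lexmax_above Y X') (lexmax X).

Definition peak_measure (X Y : list I) : list I := lexmax X ++ lexmax Y.

Lemma decr_valley_nil_l Y : decr_valley [] Y [] Y.
Proof. split; [unfold lexmax_above; rewrite strip_down_nil |]; apply mle_refl. Qed.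

Lemma decr_valley_nil_r X : decr_valley X [] X [].
Proof. split; [| unfold lexmax_above; rewrite strip_down_nil]; apply mle_refl. Qed.

Definition opt_label (b : I) (B : list I) : Prop := B = [] \/ B = [b].

Lemma perm_swap_mid (L M N P : list I) :
  Permutation ((L ++ M) ++ (N ++ P)) (L ++ (N ++ (M ++ P))).
Proof.
  rewrite <- app_assoc; apply Permutation_app_head.
  rewrite !app_assoc; apply Permutation_app_tail, Permutation_app_comm.
Qed.

Lemma down_bound X Y Z : mle (lexmax_above X Z) (lexmax Y) ->
  forall x, down Z x -> down X x \/ down Y x.
Proof.
  intros H x (z & Hz & Hzx).
  destruct (labels_bounded _ _ _ H z Hz) as [HX|(w & Hw & [<-|Hwz])];
    [left; eapply down_is_closed | right; exists z | right; exists w]; eauto.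
Qed.

Lemma down_bound_single a b Z : mle (lexmax_above [a] Z) [b] ->
  forall x, down Z x -> below2 gt a b x.
Proof.
  intros H x Hx; destruct (down_bound [a] [b] Z H x Hx) as [Ha|Hb];
    [left; apply down_single, Ha | right; apply down_single, Hb].
Qed.

Lemma down_below_single a S : Forall (gt a) S -> forall x, down S x -> down [a] x.
Proof.
  rewrite Forall_forall; intros H x (y & Hy & Hyx); apply down_single; eauto.
Qed.

Lemma strip_above_bound E S Z W : down_closed E -> (forall x, down S x -> E x) ->
  mle (lexmax_above S Z) W -> mle (strip E (lexmax Z)) (strip E W).
Proof.
  intros HE HSE H; rewrite <- (strip_absorb E (down S)) by exact HSE.
  apply mle_strip; assumption.
Qed.

Lemma below2_closed a b : down_closed (below2 gt a b).
Proof. intros x y [Hx|Hx] Hxy; [left | right]; eauto. Qed.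

Lemma below2_sym a b x : below2 gt a b x -> below2 gt b a x.
Proof. intros [H|H]; [right | left]; exact H. Qed.

Lemma above_single_app a b L1 L2 : mle (lexmax_above [a] L1) [b] ->
  Forall (below2 gt a b) L2 -> mle (lexmax_above [a] (L1 ++ L2)) [b].
Proof.
  rewrite Forall_forall; intros H1 H2; unfold lexmax_above.
  rewrite lexmax_app; unfold lexmax_above; rewrite strip_app, strip_strip.
  destruct (mle_single_inv _ _ H1) as [HP|Hlt].
  - assert (Hb : In b L1).
    { assert (Hb : In b (strip (down [a]) (lexmax L1)))
        by (eapply Permutation_in; [symmetry; exact HP | left; reflexivity]).
      apply In_strip in Hb; apply lexmax_incl, Hb. }
    rewrite (strip_all _ (lexmax L2)), app_nil_r; [left; exact HP|].
    intros x Hx; destruct (H2 x (lexmax_incl _ _ Hx)) as [Hax|Hbx];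
      [left; apply down_single, Hax | right; eapply down_in; eassumption].
  - right; apply mlt_below_single; intros k Hk; apply in_app_or in Hk.
    destruct Hk as [Hk|Hk]; [exact (Hlt k Hk)|].
    apply In_strip in Hk; destruct Hk as [Hk Hnk].
    destruct (H2 k (lexmax_incl _ _ Hk)) as [Hak|Hbk]; [|exact Hbk].
    exfalso; apply Hnk; left; apply down_single, Hak.
Qed.

Lemma peak_measure_below_pair a b X Y :
  Forall (below2 gt a b) X -> Forall (below2 gt a b) Y -> mlt (peak_measure X Y) [a; b].
Proof.
  intros HX HY; apply mlt_below_pair; apply Forall_forall.
  apply Forall_app; split; apply lexmax_bounded; assumption.
Qed.

(** Measure of the tiles closing the conversions of a decreasing local peak. *)
Lemma local_tile_measure a b V B U : Forall (gt a) V -> opt_label b B ->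
  Forall (below2 gt a b) U -> mlt (peak_measure V (B ++ U)) [a; b].
Proof.
  intros HV HB HU; destruct HB as [->| ->].
  - apply peak_measure_below_pair; [eapply Forall_impl; [intros x Hx; left; exact Hx|] |]; assumption.
  - (* the step [b] stays, [a] is replaced by the remaining labels *)
    apply t_step; exists a, [b], (lexmax V ++ lexmax_above [b] U); split; [reflexivity|split].
    + unfold peak_measure; rewrite <- app_assoc; apply Permutation_app_head, Permutation_cons_append.
    + apply lexmax_bounded in HV; rewrite Forall_forall in HV, HU.
      intros k Hk; apply in_app_or in Hk; destruct Hk as [Hk|Hk]; [exact (HV k Hk)|].
      apply In_strip in Hk; destruct Hk as [Hk Hn].
      destruct (HU k (lexmax_incl _ _ Hk)) as [Hak|Hbk]; [exact Hak|].
      exfalso; apply Hn, down_single, Hbk.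
Qed.

(** The valley of a decreasing local peak, assembled from its five pieces,
    satisfies [lexmax_above [a] P <= [b]]. *)
Lemma local_valley_bound a b U1 U4 U6 V1 B U2 :
  Forall (gt a) U1 -> Forall (gt a) V1 ->
  mle (lexmax_above V1 U4) (lexmax (B ++ U2)) -> opt_label b B ->
  Forall (below2 gt a b) U2 -> Forall (below2 gt a b) U6 ->
  mle (lexmax_above [a] (U1 ++ U4 ++ U6)) [b].
Proof.
  intros HU1 HV1 H4 HB HU2 HU6; rewrite app_assoc; apply above_single_app; [|exact HU6].
  unfold lexmax_above at 1; rewrite lexmax_app, strip_app.
  rewrite (strip_all _ (lexmax U1)).
  2:{ apply lexmax_bounded in HU1; rewrite Forall_forall in HU1.
      intros x Hx; apply down_single, HU1, Hx. }
  simpl; unfold lexmax_above.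
  rewrite strip_absorb by exact (down_below_single a U1 HU1).
  rewrite <- (strip_absorb (down [a]) (down V1)) by exact (down_below_single a V1 HV1).
  eapply mle_trans; [apply mle_strip; [apply down_is_closed | exact H4]|].
  apply above_single_app; [|exact HU2].
  destruct HB as [->| ->]; [right; apply mlt_below_single; intros k [] | apply mle_strip_self].
Qed.

(** The tile below the local peak has a smaller measure. *)
Lemma left_tile_measure a b X1 Y1 P : mle (lexmax_above [a] P) [b] ->
  mlt (peak_measure X1 P) (peak_measure (a :: X1) (b :: Y1)).
Proof.
  intros Hloc; unfold peak_measure; simpl.
  fold (lexmax_above [a] X1) (lexmax_above [a] P) (lexmax_above [b] Y1).
  set (Da := down [a]).
  apply mlt_perm with
    (lexmax_above [a] X1 ++ (lexmax_above [a] P ++ (select Da (lexmax X1) ++ select Da (lexmax P))))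
    (lexmax_above [a] X1 ++ ((b :: lexmax_above [b] Y1) ++ [a])).
  - rewrite <- perm_swap_mid; apply Permutation_app; symmetry; apply strip_select.
  - rewrite app_assoc; simpl; symmetry; apply Permutation_cons_append.
  - apply mlt_app_r; [apply mle_refl|]; apply mlt_app_r.
    + apply mle_trans with [b]; [exact Hloc | apply (mle_app_self [b])].
    + apply mlt_below_single; intros k Hk; apply in_app_or in Hk.
      destruct Hk as [Hk|Hk]; apply In_select, proj2, down_single in Hk; exact Hk.
Qed.

(** The last tile, closing the two valleys produced below the first row of
    tiles, has a smaller measure. *)
Lemma last_tile_measure a b X1 Y1 P Q X1' Y1' :
  mle (lexmax_above [a] P) [b] -> mle (lexmax_above [b] Q) [a] ->
  mle (lexmax_above P X1') (lexmax X1) -> mle (lexmax_above Q Y1') (lexmax Y1) ->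
  mlt (peak_measure X1' Y1') (peak_measure (a :: X1) (b :: Y1)).
Proof.
  intros Hloc Hloc' Hleft' Hright; unfold peak_measure; simpl.
  fold (lexmax_above [a] X1) (lexmax_above [b] Y1).
  set (sel1 := select (down P) (lexmax X1')); set (sel2 := select (down Q) (lexmax Y1')).
  set (selX := select (down [a]) (lexmax X1)); set (selY := select (down [b]) (lexmax Y1)).
  apply mle_mlt_trans with ((lexmax_above P X1' ++ lexmax_above Q Y1') ++ (sel1 ++ sel2)).
  { left; rewrite (Permutation_app (strip_select (down P) (lexmax X1'))
                                    (strip_select (down Q) (lexmax Y1'))).
    rewrite perm_swap_mid, <- app_assoc; reflexivity. }
  apply mle_mlt_trans with ((lexmax X1 ++ lexmax Y1) ++ (sel1 ++ sel2)).
  { apply mle_app; [apply mle_app; assumption | apply mle_refl]. }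
  apply mlt_perm with
    ((lexmax_above [a] X1 ++ lexmax_above [b] Y1) ++ ((selX ++ selY) ++ (sel1 ++ sel2)))
    ((lexmax_above [a] X1 ++ lexmax_above [b] Y1) ++ [a; b]).
  - rewrite app_assoc; apply Permutation_app_tail.
    rewrite (Permutation_app (strip_select (down [a]) (lexmax X1))
                             (strip_select (down [b]) (lexmax Y1))).
    symmetry; rewrite perm_swap_mid, app_assoc; reflexivity.
  - rewrite Permutation_app_comm; simpl; apply perm_skip, Permutation_middle.
  - apply mlt_app_r; [apply mle_refl|]; apply mlt_below_pair; intros k Hk.
    repeat (apply in_app_or in Hk; destruct Hk as [Hk|Hk]); apply In_select, proj2 in Hk.
    + left; apply down_single, Hk.
    + right; apply down_single, Hk.
    + exact (down_bound_single _ _ _ Hloc k Hk).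
    + destruct (down_bound_single _ _ _ Hloc' k Hk); [right | left]; assumption.
Qed.

(** In the pasting below, the labels of the valley [Y2] of the last tile that
    are not below [b], [a] or [X1] are bounded by [lexmax_above [b] Y1]: the
    bound is transported along the right column of tiles. *)
Lemma last_tile_above_bound a b X1 Y1 P Q X1' Y1' Y2 :
  mle (lexmax_above [a] P) [b] -> mle (lexmax_above [b] Q) [a] ->
  mle (lexmax_above P X1') (lexmax X1) ->
  mle (lexmax_above X1' Y2) (lexmax Y1') -> mle (lexmax_above Q Y1') (lexmax Y1) ->
  mle (strip (fun x => down [b] x \/ down (a :: X1) x) (lexmax Y2)) (lexmax_above [b] Y1).
Proof.
  intros Hloc Hloc' Hleft' Hlast Hright; set (E := fun x => down [b] x \/ down (a :: X1) x).
  assert (HE : down_closed E)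
    by (intros x y [Hx|Hx] Hxy; [left | right]; eapply down_is_closed; eassumption).
  assert (HX1' : forall x, down X1' x -> E x).
  { intros x Hx; destruct (down_bound _ _ _ Hleft' x Hx) as [HP|HX1].
    - destruct (down_bound_single _ _ _ Hloc x HP) as [Hax|Hbx];
        [right; apply down_cons; left | left; apply down_single]; assumption.
    - right; apply down_cons; right; exact HX1. }
  assert (HQ : forall x, down Q x -> E x).
  { intros x Hx; destruct (down_bound_single _ _ _ Hloc' x Hx) as [Hbx|Hax];
      [left; apply down_single | right; apply down_cons; left]; assumption. }
  eapply mle_trans; [exact (strip_above_bound E _ _ _ HE HX1' Hlast)|].
  eapply mle_trans; [exact (strip_above_bound E _ _ _ HE HQ Hright)|].
  apply mle_strip_weaken; intros x Hx; left; exact Hx.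
Qed.

(** Pasting (one half; the other half is the mirror image): a decreasing
    valley [Q, P] for the local peak [a, b], decreasing valleys for the tiles
    [X1, P] and [Q, Y1] below it and for the last tile [X1', Y1'] compose to a
    decreasing valley for the whole peak [a :: X1, b :: Y1]. *)
Lemma paste_half a b X1 Y1 P Q P' X1' Y1' Y2 :
  mle (lexmax_above [a] P) [b] -> mle (lexmax_above [b] Q) [a] ->
  mle (lexmax_above X1 P') (lexmax P) -> mle (lexmax_above P X1') (lexmax X1) ->
  mle (lexmax_above X1' Y2) (lexmax Y1') -> mle (lexmax_above Q Y1') (lexmax Y1) ->
  mle (lexmax_above (a :: X1) (P' ++ Y2)) (lexmax (b :: Y1)).
Proof.
  intros Hloc Hloc' Hleft Hleft' Hlast Hright.
  set (Dx := down (a :: X1)).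
  set (T := strip Dx (lexmax P')); set (R := strip Dx (lexmax_above P' Y2)).
  (* the part of the valley coming from the first tile is bounded by [b] *)
  assert (HT : mle T [b]).
  { unfold T; rewrite (strip_ext Dx (fun x => down [a] x \/ down X1 x))
      by (intros x; unfold Dx; rewrite down_cons, down_single; reflexivity).
    rewrite <- strip_strip; eapply mle_trans; [|exact Hloc].
    apply mle_strip; [apply down_is_closed | exact Hleft]. }
  (* the labels of the last tile below [b] are absorbed by [b] as well *)
  assert (Hlow : mle (T ++ select (down [b]) R) [b]).
  { destruct (mle_single_inv _ _ HT) as [HP|Hlt].
    - assert (HbP' : In b P').
      { assert (Hb : In b T) by (eapply Permutation_in; [symmetry; exact HP | left; reflexivity]).
        apply In_strip in Hb; apply lexmax_incl, Hb. }
      rewrite select_none, app_nil_r; [left; exact HP|].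
      intros x Hx Hbx; unfold R, lexmax_above in Hx; rewrite strip_strip, In_strip in Hx.
      apply Hx; right; eapply down_in; [exact HbP' | apply down_single, Hbx].
    - right; apply mlt_below_single; intros k Hk; apply in_app_or in Hk.
      destruct Hk as [Hk|Hk]; [exact (Hlt k Hk) |].
      apply In_select, proj2, down_single in Hk; exact Hk. }
  assert (Hhigh : mle (strip (down [b]) R) (lexmax_above [b] Y1)).
  { eapply mle_trans;
      [| exact (last_tile_above_bound a b X1 Y1 P Q X1' Y1' Y2 Hloc Hloc' Hleft' Hlast Hright)].
    unfold R, lexmax_above; rewrite !strip_strip; apply mle_strip_weaken; tauto. }
  unfold lexmax_above at 1; rewrite lexmax_app, strip_app; fold T R; simpl.
  eapply mle_perm; [| reflexivity | apply (mle_app _ _ _ _ Hlow Hhigh)].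
  rewrite <- app_assoc; apply Permutation_app_head.
  rewrite Permutation_app_comm; symmetry; apply strip_select.
Qed.

Lemma paste a b X1 Y1 P Q P' X1' Y1' Q' X2 Y2 :
  decr_valley [a] [b] Q P -> decr_valley X1 P X1' P' ->
  decr_valley Q Y1 Q' Y1' -> decr_valley X1' Y1' X2 Y2 ->
  decr_valley (a :: X1) (b :: Y1) (Q' ++ X2) (P' ++ Y2).
Proof.
  intros [Hloc Hloc'] [Hleft Hleft'] [Hright Hright'] [Hlast Hlast']; split.
  - exact (paste_half a b X1 Y1 P Q P' X1' Y1' Y2 Hloc Hloc' Hleft Hleft' Hlast Hright).
  - exact (paste_half b a Y1 X1 Q P Q' Y1' X1' X2 Hloc' Hloc Hright' Hright Hlast' Hleft').
Qed.

Lemma valley_labels D S Z W : down_closed D -> (forall x, down S x -> D x) ->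
  Forall D W -> mle (lexmax_above S Z) (lexmax W) -> Forall D Z.
Proof.
  rewrite !Forall_forall; intros HD HS HW H z Hz.
  destruct (labels_bounded _ _ _ H z Hz) as [HSz|(w & Hw & [<-|Hwz])];
    [exact (HS z HSz) | exact (HW z Hw) | exact (HD w z (HW w Hw) Hwz)].
Qed.

Lemma down_of_labels D S : down_closed D -> Forall D S -> forall x, down S x -> D x.
Proof. rewrite Forall_forall; intros HD HS x (y & Hy & Hyx); exact (HD y x (HS y Hy) Hyx). Qed.

Lemma decr_valley_labels D X Y X' Y' : down_closed D -> decr_valley X Y X' Y' ->
  Forall D X -> Forall D Y -> Forall D X' /\ Forall D Y'.
Proof.
  intros HD [H1 H2] HX HY; split;
    [apply (valley_labels D Y X' X) | apply (valley_labels D X Y' Y)];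
    try apply down_of_labels; assumption.
Qed.

Lemma tile_labels a b B U W Z : opt_label b B -> Forall (below2 gt a b) U ->
  Forall (gt a) W -> mle (lexmax_above (B ++ U) Z) (lexmax W) -> Forall (below2 gt a b) Z.
Proof.
  intros HB HU HW H; apply (valley_labels _ (B ++ U) Z W (below2_closed a b)); [| | exact H].
  - intros x Hx; apply down_app in Hx; destruct Hx as [(y & Hy & Hyx)|Hx].
    + destruct HB as [->| ->]; [destruct Hy | destruct Hy as [<-|[]]; right; exact Hyx].
    + exact (down_of_labels _ _ (below2_closed a b) HU x Hx).
  - eapply Forall_impl; [intros x Hx; left; exact Hx | exact HW].
Qed.

(** * Closing peaks of labelled reduction sequences *)

Section Completion.
Variable A : Type.
Variables R1 R2 : ARS I A.
Hypothesis Hdec : forall alpha beta a b c, R1 alpha a b -> R2 beta a c ->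
  decreasing_peak gt R1 R2 alpha beta b c.

Fixpoint chain (R : ARS I A) (l : list I) (a b : A) : Prop :=
  match l with
  | [] => a = b
  | x :: l' => exists c, R x a c /\ chain R l' c b
  end.

Lemma chain_app R X Y a b c : chain R X a b -> chain R Y b c -> chain R (X ++ Y) a c.
Proof.
  revert a; induction X as [|x X IH]; simpl; intros a H1 H2; [subst; exact H2|].
  destruct H1 as (e & He & H1); exists e; split; [exact He | apply (IH e H1 H2)].
Qed.

Lemma chain_opt R g x y : rrefl (R g) x y -> exists B, opt_label g B /\ chain R B x y.
Proof.
  intros [<-|H]; [exists []; split; [left|]; reflexivity |].
  exists [g]; split; [right; reflexivity | exists y; split; [exact H | reflexivity]].
Qed.

Lemma chain_of_rt R a b : clos_refl_trans A (ars_union R) a b -> exists X, chain R X a b.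
Proof.
  induction 1 as [x y [g H]| x | x y z _ [X1 H1] _ [X2 H2]].
  - exists [g]; exists y; split; [exact H | reflexivity].
  - exists []; reflexivity.
  - exists (X1 ++ X2); eapply chain_app; eassumption.
Qed.

Lemma rt_of_chain R X a b : chain R X a b -> clos_refl_trans A (ars_union R) a b.
Proof.
  revert a; induction X as [|x X IH]; simpl; intros a H; [subst; apply rt_refl|].
  destruct H as (e & He & H); eapply rt_trans; [apply rt_step; exists x; exact He | exact (IH e H)].
Qed.

Definition completable (X Y : list I) : Prop :=
  forall a b c, chain R1 X a b -> chain R2 Y a c ->
  exists d X' Y', chain R2 Y' b d /\ chain R1 X' c d /\ decr_valley X Y X' Y'.

Lemma conversion_valley D : down_closed D ->
  (forall X Y, Forall D X -> Forall D Y -> completable X Y) ->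
  forall x y, clos_refl_trans A (conv_K R1 R2 D) x y ->
  exists z U V, chain R2 U x z /\ chain R1 V y z /\ Forall D U /\ Forall D V.
Proof.
  intros HD Hcomp; induction 1 as [x y (g & Hg & [H|H])| x | x y w _ IH1 _ IH2].
  - exists x, [], [g].
    refine (conj eq_refl (conj _ (conj (Forall_nil _) (Forall_cons _ Hg (Forall_nil _))))).
    exists x; split; [exact H | reflexivity].
  - exists y, [g], [].
    refine (conj _ (conj eq_refl (conj (Forall_cons _ Hg (Forall_nil _)) (Forall_nil _)))).
    exists y; split; [exact H | reflexivity].
  - exists x, [], []; refine (conj eq_refl (conj eq_refl (conj (Forall_nil _) (Forall_nil _)))).
  - destruct IH1 as (z1 & U1 & V1 & HU1 & HV1 & DU1 & DV1).
    destruct IH2 as (z2 & U2 & V2 & HU2 & HV2 & DU2 & DV2).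
    destruct (Hcomp V1 U2 DV1 DU2 y z1 z2 HV1 HU2) as (q & X' & Y' & HY' & HX' & Hv).
    destruct (decr_valley_labels D _ _ _ _ HD Hv DV1 DU2) as [DX' DY'].
    exists q, (U1 ++ Y'), (V2 ++ X'); repeat split;
      try (eapply chain_app; eassumption); apply Forall_app; split; assumption.
Qed.

(** In the diagram
    [a1 <->*(<a) e1 ->=(b) e2 <->*(<a or <b) e3 <-=(a) e4 <->*(<b) c1] the three
    conversions are turned into valleys meeting at [f1], [f2], [f3]; then the
    peaks at [e1] and [e4], and finally the peak at [f2], are closed. *)
Lemma local_peak_valley a b a1 c1 :
  (forall X Y, mlt (peak_measure X Y) [a; b] -> completable X Y) ->
  decreasing_peak gt R1 R2 a b a1 c1 ->
  exists g P Q, chain R2 P a1 g /\ chain R1 Q c1 g /\ decr_valley [a] [b] Q P.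
Proof.
  intros IH (e1 & H1 & e2 & HB & e3 & H2 & e4 & HA & H3).
  assert (Hlow : forall D, (forall x, D x -> below2 gt a b x) ->
             forall X Y, Forall D X -> Forall D Y -> completable X Y).
  { intros D HD X Y HX HY; apply IH, peak_measure_below_pair; eapply Forall_impl; eassumption. }
  destruct (conversion_valley (below gt a) (fun x y H Hxy => gt_trans _ _ _ H Hxy)
              (Hlow _ (fun x H => or_introl H)) _ _ H1) as (f1 & U1 & V1 & HU1 & HV1 & DU1 & DV1).
  destruct (conversion_valley (below2 gt a b) (below2_closed a b)
              (Hlow _ (fun x H => H)) _ _ H2) as (f2 & U2 & V2 & HU2 & HV2 & DU2 & DV2).
  destruct (conversion_valley (below gt b) (fun x y H Hxy => gt_trans _ _ _ H Hxy)
              (Hlow _ (fun x H => or_intror H)) _ _ H3) as (f3 & U3 & V3 & HU3 & HV3 & DU3 & DV3).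
  destruct (chain_opt R2 b e1 e2 HB) as (B & HBB & HBc).
  destruct (chain_opt R1 a e4 e3 HA) as (Aa & HAA & HAc).
  assert (DV2' : Forall (below2 gt b a) V2) by (eapply Forall_impl; [apply below2_sym | exact DV2]).
  (* the peaks at [e1] and at [e4] *)
  destruct (IH V1 (B ++ U2) (local_tile_measure a b V1 B U2 DV1 HBB DU2)
              e1 f1 f2 HV1 (chain_app _ _ _ _ _ _ HBc HU2)) as (h1 & V4 & U4 & HU4 & HV4 & Hv1).
  assert (Hm : mlt (peak_measure (Aa ++ V2) U3) [a; b]).
  { eapply mlt_perm; [apply Permutation_app_comm | apply perm_swap |].
    exact (local_tile_measure b a U3 Aa V2 DU3 HAA DV2'). }
  destruct (IH (Aa ++ V2) U3 Hm e4 f2 f3 (chain_app _ _ _ _ _ _ HAc HV2) HU3)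
    as (h2 & V5 & U5 & HU5 & HV5 & Hv2).
  (* the peak at [f2], whose labels are below [a] or [b] *)
  assert (DV4 : Forall (below2 gt a b) V4)
    by exact (tile_labels a b B U2 V1 V4 HBB DU2 DV1 (proj2 Hv1)).
  assert (DU5 : Forall (below2 gt a b) U5).
  { eapply Forall_impl; [apply below2_sym |].
    exact (tile_labels b a Aa V2 U3 U5 HAA DV2' DU3 (proj1 Hv2)). }
  destruct (Hlow _ (fun x H => H) V4 U5 DV4 DU5 f2 h1 h2 HV4 HU5)
    as (d & V6 & U6 & HU6 & HV6 & Hv3).
  destruct (decr_valley_labels _ _ _ _ _ (below2_closed a b) Hv3 DV4 DU5) as [DV6 DU6].
  exists d, (U1 ++ U4 ++ U6), (V3 ++ V5 ++ V6); split; [|split; [|split]].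
  - repeat (eapply chain_app; [eassumption|]); eassumption.
  - repeat (eapply chain_app; [eassumption|]); eassumption.
  - exact (local_valley_bound a b U1 U4 U6 V1 B U2 DU1 DV1 (proj1 Hv1) HBB DU2 DU6).
  - apply (local_valley_bound b a V3 V5 V6 U3 Aa V2 DV3 DU3 (proj2 Hv2) HAA DV2').
    eapply Forall_impl; [apply below2_sym | exact DV6].
Qed.

(** A nontrivial peak [a :: X1, b :: Y1] is closed by four
    tiles of smaller measure: the local peak [a, b], the tiles below its two
    legs, and the last tile between them. *)
Lemma all_completable X Y : completable X Y.
Proof.
  remember (peak_measure X Y) as m eqn:Hm; revert X Y Hm.
  induction m as [m IH] using (well_founded_induction mlt_wf); intros X Y -> a b c HX HY.
  assert (IHm : forall X' Y', mlt (peak_measure X' Y') (peak_measure X Y) -> completable X' Y')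
    by (intros X' Y' H; eapply IH; [exact H | reflexivity]).
  clear IH; destruct X as [|alpha X1].
  { simpl in HX; subst b; exists c, [], Y; split; [exact HY | split; [reflexivity |]].
    apply decr_valley_nil_l. }
  destruct Y as [|beta Y1].
  { simpl in HY; subst c; exists b, (alpha :: X1), []; split; [reflexivity | split; [exact HX |]].
    apply decr_valley_nil_r. }
  destruct HX as (a1 & Ha1 & HX1); destruct HY as (c1 & Hc1 & HY1).
  assert (Hab : mle [alpha; beta] (peak_measure (alpha :: X1) (beta :: Y1))).
  { eapply mle_perm; [reflexivity | | apply (mle_app_self [alpha; beta]
      (lexmax_above [alpha] X1 ++ lexmax_above [beta] Y1))].
    unfold peak_measure; simpl; apply perm_skip, Permutation_middle. }
  destruct (local_peak_valley alpha beta a1 c1) as (g & P & Q & HP & HQ & Hv0);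
    [intros X' Y' H; apply IHm; eapply mlt_mle_trans; eassumption | exact (Hdec _ _ _ _ _ Ha1 Hc1) |].
  destruct (IHm X1 P (left_tile_measure alpha beta X1 Y1 P (proj1 Hv0)) a1 b g HX1 HP)
    as (h & X1' & P' & HP' & HX1' & Hv1).
  assert (HmQ : mlt (peak_measure Q Y1) (peak_measure (alpha :: X1) (beta :: Y1))).
  { unfold peak_measure; eapply mlt_perm; [apply Permutation_app_comm | apply Permutation_app_comm |].
    apply (left_tile_measure beta alpha Y1 X1 Q (proj2 Hv0)). }
  destruct (IHm Q Y1 HmQ c1 g c HQ HY1) as (k & Q' & Y1' & HY1' & HQ' & Hv2).
  destruct (IHm X1' Y1' (last_tile_measure alpha beta X1 Y1 P Q X1' Y1'
                           (proj1 Hv0) (proj2 Hv0) (proj2 Hv1) (proj1 Hv2)) g h k HX1' HY1')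
    as (d & X2 & Y2 & HY2 & HX2 & Hv3).
  exists d, (Q' ++ X2), (P' ++ Y2); split; [|split].
  - eapply chain_app; eassumption.
  - eapply chain_app; eassumption.
  - exact (paste alpha beta X1 Y1 P Q P' X1' Y1' Q' X2 Y2 Hv0 Hv1 Hv2 Hv3).
Qed.

Theorem decreasing_commute : ars_commute R1 R2.
Proof.
  intros a b c Hb Hc.
  destruct (chain_of_rt _ _ _ Hb) as [X HX]; destruct (chain_of_rt _ _ _ Hc) as [Y HY].
  destruct (all_completable X Y a b c HX HY) as (d & X' & Y' & HY' & HX' & _).
  exists d; split; eapply rt_of_chain; eassumption.
Qed.

End Completion.
End DecreasingDiagrams.

Lemma conv_mono {I A : Type} (R1 R2 R1' R2' : ARS I A) (K K' : I -> Prop) :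
  (forall g, K g -> K' g) -> (forall g x y, R1 g x y -> R1' g x y) ->
  (forall g x y, R2 g x y -> R2' g x y) ->
  forall x y, clos_refl_trans A (conv_K R1 R2 K) x y -> clos_refl_trans A (conv_K R1' R2' K') x y.
Proof.
  intros HK H1 H2; induction 1 as [x y (g & Hg & [H|H])| |].
  - apply rt_step; exists g; split; [apply HK, Hg | left; apply H1, H].
  - apply rt_step; exists g; split; [apply HK, Hg | right; apply H2, H].
  - apply rt_refl.
  - eapply rt_trans; eassumption.
Qed.

Lemma conv_swap {I A : Type} (R1 R2 : ARS I A) (K K' : I -> Prop) :
  (forall g, K g -> K' g) ->
  forall x y, clos_refl_trans A (conv_K R1 R2 K) x y -> clos_refl_trans A (conv_K R2 R1 K') y x.
Proof.
  intros HK; induction 1 as [x y (g & Hg & H)| |].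
  - apply rt_step; exists g; split; [apply HK, Hg | apply or_comm, H].
  - apply rt_refl.
  - eapply rt_trans; eassumption.
Qed.

Lemma decreasing_peak_swap {I A : Type} (gt : I -> I -> Prop) (R1 R2 : ARS I A) alpha beta b c :
  decreasing_peak gt R1 R2 alpha beta b c -> decreasing_peak gt R2 R1 beta alpha c b.
Proof.
  intros (e1 & H1 & e2 & HB & e3 & H2 & e4 & HA & H3).
  exists e4; split; [apply (conv_swap R1 R2 _ _ (fun g H => H)), H3 |].
  exists e3; split; [exact HA |].
  exists e2; split; [apply (conv_swap R1 R2 (below2 gt alpha beta)), H2; intros g; apply or_comm |].
  exists e1; split; [exact HB | apply (conv_swap R1 R2 _ _ (fun g H => H)), H1].
Qed.

(** * Eliminating the bottom label

    Replacing the steps labelled [bot] by their reflexive-transitive closure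
    does not change reachability.  In the lifted systems every local peak is
    decreasing: peaks [bot, bot] by the commutation hypothesis, and peaks
    [alpha, bot] with [alpha <> bot] (or the mirror image) by pasting the
    decreasing diagrams along the [bot]-sequence. *)

Definition lift_bot {I A : Type} (bot : I) (R : ARS I A) : ARS I A :=
  fun g x y => (g = bot /\ clos_refl_trans A (R bot) x y) \/ (g <> bot /\ R g x y).

Lemma lift_bot_incl {I A : Type} (bot : I) (R : ARS I A) g x y : R g x y -> lift_bot bot R g x y.
Proof.
  intros H; destruct (classic (g = bot)) as [->|Hg]; [left; split; [reflexivity | apply rt_step, H] |].
  right; split; assumption.
Qed.

Lemma conv_lift_bot {I A : Type} (bot : I) (R1 R2 : ARS I A) (K K' : I -> Prop) x y :
  (forall g, K g -> K' g) -> clos_refl_trans A (conv_K R1 R2 K) x y ->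
  clos_refl_trans A (conv_K (lift_bot bot R1) (lift_bot bot R2) K') x y.
Proof. intros HK; apply conv_mono; [exact HK | apply lift_bot_incl | apply lift_bot_incl]. Qed.

Lemma decreasing_peak_lift_bot {I A : Type} (gt : I -> I -> Prop) (bot : I) (R1 R2 : ARS I A)
  alpha beta b c : decreasing_peak gt R1 R2 alpha beta b c ->
  decreasing_peak gt (lift_bot bot R1) (lift_bot bot R2) alpha beta b c.
Proof.
  intros (e1 & H1 & e2 & HB & e3 & H2 & e4 & HA & H3).
  exists e1; split; [apply (conv_lift_bot bot R1 R2 _ _ _ _ (fun g H => H)), H1 |].
  exists e2; split; [destruct HB as [<-|HB]; [left | right; apply lift_bot_incl]; auto |].
  exists e3; split; [apply (conv_lift_bot bot R1 R2 _ _ _ _ (fun g H => H)), H2 |].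
  exists e4; split; [destruct HA as [<-|HA]; [left | right; apply lift_bot_incl]; auto |].
  apply (conv_lift_bot bot R1 R2 _ _ _ _ (fun g H => H)), H3.
Qed.

Lemma lift_bot_rt {I A : Type} (bot : I) (R : ARS I A) x y :
  clos_refl_trans A (ars_union (lift_bot bot R)) x y -> clos_refl_trans A (ars_union R) x y.
Proof.
  induction 1 as [x y (g & [(-> & H)|(_ & H)])| |].
  - induction H as [x y H| |];
      [apply rt_step; exists bot; exact H | apply rt_refl | eapply rt_trans; eassumption].
  - apply rt_step; exists g; exact H.
  - apply rt_refl.
  - eapply rt_trans; eassumption.
Qed.

Lemma rt_lift_bot {I A : Type} (bot : I) (R : ARS I A) x y :
  clos_refl_trans A (ars_union R) x y -> clos_refl_trans A (ars_union (lift_bot bot R)) x y.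
Proof.
  induction 1 as [x y (g & H)| |];
    [apply rt_step; exists g; apply lift_bot_incl, H | apply rt_refl | eapply rt_trans; eassumption].
Qed.

Lemma commute_of_lift_bot {I A : Type} (bot : I) (R1 R2 : ARS I A) :
  ars_commute (lift_bot bot R1) (lift_bot bot R2) -> ars_commute R1 R2.
Proof.
  intros H a b c Hb Hc.
  destruct (H a b c (rt_lift_bot bot R1 a b Hb) (rt_lift_bot bot R2 a c Hc)) as (d & Hbd & Hcd).
  exists d; split; eapply lift_bot_rt; eassumption.
Qed.

Section BottomPeaks.
Variables (I A : Type) (R1 R2 : ARS I A) (gt : I -> I -> Prop) (bot : I).
Hypothesis gt_irrefl : forall x, ~ gt x x.
Hypothesis gt_trans : forall x y z, gt x y -> gt y z -> gt x z.
Hypothesis bot_least : forall x, x <> bot -> gt x bot.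
Hypothesis Hdec : forall alpha beta a b c, ~ (alpha = bot /\ beta = bot) ->
  R1 alpha a b -> R2 beta a c -> decreasing_peak gt R1 R2 alpha beta b c.

Lemma nothing_below_bot g : ~ gt bot g.
Proof.
  intros H; destruct (classic (g = bot)) as [->|Hg]; [exact (gt_irrefl _ H) |].
  exact (gt_irrefl _ (gt_trans _ _ _ H (bot_least g Hg))).
Qed.

Lemma conv_below_bot x y : clos_refl_trans A (conv_K R1 R2 (below gt bot)) x y -> x = y.
Proof.
  induction 1 as [x y (g & Hg & _)| |];
    [exfalso; exact (nothing_below_bot g Hg) | reflexivity | congruence].
Qed.

Lemma peak_bot_sequence alpha : alpha <> bot -> forall a c,
  clos_refl_trans_1n A (R2 bot) a c -> forall b, R1 alpha a b ->
  exists e, clos_refl_trans A (conv_K (lift_bot bot R1) (lift_bot bot R2) (below gt alpha)) b e /\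
    rrefl (lift_bot bot R1 alpha) c e.
Proof.
  intros Ha a c Hac; induction Hac as [a|a a' c Haa' Ha'c IH]; intros b Hab.
  - exists b; split; [apply rt_refl | right; right; split; assumption].
  - destruct (Hdec alpha bot a b a') as (e1 & H1 & e2 & HB & e3 & H2 & e4 & HA & H3);
      [intros [H _]; exact (Ha H) | exact Hab | exact Haa' |].
    apply conv_below_bot in H3; subst e4.
    assert (Hbe3 :
      clos_refl_trans A (conv_K (lift_bot bot R1) (lift_bot bot R2) (below gt alpha)) b e3).
    { eapply rt_trans; [apply (conv_lift_bot bot R1 R2 (below gt alpha)), H1; exact (fun g H => H) |].
      eapply rt_trans; [destruct HB as [<-|HB]; [apply rt_refl |] |].
      - apply rt_step; exists bot; split; [apply bot_least, Ha |].
        right; left; split; [reflexivity | apply rt_step, HB].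
      - apply (conv_lift_bot bot R1 R2 (below2 gt alpha bot)), H2.
        intros g [Hg|Hg]; [exact Hg | exfalso; exact (nothing_below_bot g Hg)]. }
    destruct HA as [<-|HA].
    + exists c; split; [| left; reflexivity].
      eapply rt_trans; [exact Hbe3 |]; apply rt_step; exists bot; split; [apply bot_least, Ha |].
      right; left; split; [reflexivity | apply clos_rt1n_rt, Ha'c].
    + destruct (IH e3 HA) as (e & He & Hce).
      exists e; split; [eapply rt_trans; eassumption | exact Hce].
Qed.

End BottomPeaks.

Lemma lift_bot_decreasing {I A : Type} (R1 R2 : ARS I A) (gt : I -> I -> Prop) (bot : I)
  (gt_irrefl : forall x, ~ gt x x)
  (gt_trans : forall x y z, gt x y -> gt y z -> gt x z)
  (bot_least : forall x, x <> bot -> gt x bot)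
  (Hbot : commute (R1 bot) (R2 bot))
  (Hdec : forall alpha beta a b c, ~ (alpha = bot /\ beta = bot) ->
      R1 alpha a b -> R2 beta a c -> decreasing_peak gt R1 R2 alpha beta b c) :
  forall alpha beta a b c, lift_bot bot R1 alpha a b -> lift_bot bot R2 beta a c ->
    decreasing_peak gt (lift_bot bot R1) (lift_bot bot R2) alpha beta b c.
Proof.
  assert (Hdec' : forall alpha beta a b c, ~ (alpha = bot /\ beta = bot) ->
      R2 alpha a b -> R1 beta a c -> decreasing_peak gt R2 R1 alpha beta b c).
  { intros alpha beta a b c Hnb Hb Hc.
    apply decreasing_peak_swap, (Hdec beta alpha a); [tauto | exact Hc | exact Hb]. }
  intros alpha beta a b c [(-> & Hb)|(Ha & Hb)] [(-> & Hc)|(Hb' & Hc)].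
  - (* two bot-sequences: by commutation of the bot-steps *)
    destruct (Hbot a b c Hb Hc) as (d & Hbd & Hcd).
    exists b; split; [apply rt_refl |].
    exists d; split; [right; left; split; [reflexivity | exact Hbd] |].
    exists d; split; [apply rt_refl |].
    exists c; split; [right; left; split; [reflexivity | exact Hcd] | apply rt_refl].
  - (* a bot-sequence against a [beta]-step: mirror image of the next case *)
    apply clos_rt_rt1n in Hb.
    destruct (peak_bot_sequence I A R2 R1 gt bot gt_irrefl gt_trans bot_least Hdec' beta Hb' a b Hb c Hc)
      as (e & He & Hbe).
    exists b; split; [apply rt_refl |]; exists e; split; [exact Hbe |].
    exists e; split; [apply rt_refl |]; exists e; split; [left; reflexivity |].
    apply (conv_swap _ _ _ _ (fun g H => H)), He.
  -
    apply clos_rt_rt1n in Hc.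
    destruct (peak_bot_sequence I A R1 R2 gt bot gt_irrefl gt_trans bot_least Hdec alpha Ha a c Hc b Hb)
      as (e & He & Hce).
    exists e; split; [exact He |]; exists e; split; [left; reflexivity |].
    exists e; split; [apply rt_refl |]; exists c; split; [exact Hce | apply rt_refl].
  - (* no bot involved: the given decreasing diagram, lifted *)
    apply decreasing_peak_lift_bot, (Hdec alpha beta a); [intros [H _]; exact (Ha H) | exact Hb | exact Hc].
Qed.

Theorem theorem6 (I A : Type) (R1 R2 : ARS I A) (gt : I -> I -> Prop) (bot : I)
  (gt_irrefl : forall x, ~ gt x x)
  (gt_trans : forall x y z, gt x y -> gt y z -> gt x z)
  (gt_wf : well_founded (fun x y => gt y x))
  (bot_least : forall x, x <> bot -> gt x bot)
  (Hbot : commute (R1 bot) (R2 bot))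
  (Hdec : forall alpha beta a b c,
      ~ (alpha = bot /\ beta = bot) ->
      R1 alpha a b -> R2 beta a c ->
      decreasing_peak gt R1 R2 alpha beta b c) :
  ars_commute R1 R2.
Proof.
  apply (commute_of_lift_bot bot).
  apply (decreasing_commute I gt gt_trans gt_wf A).
  exact (lift_bot_decreasing R1 R2 gt bot gt_irrefl gt_trans bot_least Hbot Hdec).
Qed.
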